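(* Let $(M^n,c,v^m d\nu)$ be a smooth conformal measure space with characteristic constant $\mu$, $n\ge3$, $m\in\mathbb{R}\setminus\{-n,1-n,2-n\}$. Let $I\in\mathcal{T}$ and fix a scale $g\in c$; let $I$ have top component $\sigma$, middle $\omega$, bottom $\rho$, and let $T$ be the middle component of $\nabla^WI$ (the 2-tensor $T(x,z)=g(\nabla_x\omega+\sigma P^W(x)+\rho x,z)$). Then $$\operatorname{tr}T+mv^{-1}\langle I,\tilde J\rangle=(m+n)\rho+\delta_\phi\omega+\sigma\mathrm{J}^W,$$ where $\delta_\phi\omega=\operatorname{div}_g\omega+mv^{-1}g(\omega,\nabla v)$.
   Context: Conformal setting: $(M^n,c)$ a manifold with a conformal class of Riemannian metrics. $\mathcal{E}[w]$: conformal densities of weight $w$ (functions in a scale). Standard tractor bundle $\mathbb{T}\cong\mathbb{R}\oplus TM\oplus\mathbb{R}$ in a scale, tractor $I$ with top $\sigma$, middle $\omega$, bottom $\rho$; tractor metric $\langle I,K\rangle$ with $\langle I,I\rangle=2\sigma\rho+|\omega|^2$. $X$: top and middle $0$, bottom $1$. Schouten $P$, $\mathrm{J}=\operatorname{tr}P$. $\mathbb{D}v$ ($v\in\mathcal{E}[1]$): top $nv$, middle $n\nabla v$, bottom $-(\Delta v+\mathrm{J}v)$. SCMS: positive $v\in\mathcal{E}[1]$, $m\in\mathbb{R}$, fixed constant $\mu$. In a scale, $\mathrm{Ric}^m_\phi=\mathrm{Ric}-mv^{-1}\nabla^2v$, $R^m_\phi=R-2mv^{-1}\Delta v-m(m-1)v^{-2}|\nabla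 v|^2$, $\mathrm{J}^W=\frac{1}{2(m+n-1)}(R^m_\phi+m\mu v^{-2})$, $P^W=\frac{1}{m+n-2}(\mathrm{Ric}^m_\phi-\mathrm{J}^Wg)$ ($P^W(x)$ the vector dual to $P^W(x,\cdot)$). $J=\frac1n\mathbb{D}v$, $\tilde J=J+\frac{(m+2n-2)(\mu-(m-1)|J|^2)}{2(m+n-1)(m+n-2)\langle X,J\rangle}X$. The $W$-tractor connection $\nabla^W_xI$ has top $x\sigma-g(\omega,x)$, middle $\nabla_x\omega+\sigma P^W(x)+\rho x$, bottom $x\rho-P^W(x,\omega)$. *)

(* Pointwise (at one point of M, in an arbitrary basis of
   the tangent space) rendering of the tractor objects of the paper. *)
From HB Require Import structures.
From mathcomp Require Import all_boot all_order all_algebra.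
Set Implicit Arguments. Unset Strict Implicit. Unset Printing Implicit Defensive.
Import Order.TTheory GRing.Theory Num.Theory.
Local Open Scope ring_scope.

Section Pointwise.
Variables (R : realFieldType) (n : nat).
(* Tangent vectors are row vectors 'rV_n; bilinear forms are matrices B with
   B(x,z) = x *m B *m z^T; endomorphisms E act by x |-> x *m E.
   g is the Gram matrix of the metric at the point. *)
Variable g : 'M[R]_n.

Definition scal1 (A : 'M[R]_1) : R := A 0 0.
Definition gdot (x z : 'rV[R]_n) : R := scal1 (x *m g *m z^T).
Definition trg (B : 'M[R]_n) : R := \tr (B *m invmx g).

Definition scalR (Ric : 'M[R]_n) : R := trg Ric.
Definition schouten (Ric : 'M[R]_n) : 'M[R]_n :=
  (n%:R - 2)^-1 *: (Ric - (scalR Ric / (2 * (n%:R - 1))) *: g).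
Definition Jsch (Ric : 'M[R]_n) : R := trg (schouten Ric).

(* standard tractors in the scale g: top, middle, bottom *)
Record tractor := Tractor { ttop : R; tmid : 'rV[R]_n; tbot : R }.
Definition tmetric (I K : tractor) : R :=
  ttop I * tbot K + tbot I * ttop K + gdot (tmid I) (tmid K).
Definition tX : tractor := Tractor 0 0 1.
Definition tscale (c : R) (I : tractor) : tractor :=
  Tractor (c * ttop I) (c *: tmid I) (c * tbot I).
Definition tadd (I K : tractor) : tractor :=
  Tractor (ttop I + ttop K) (tmid I + tmid K) (tbot I + tbot K).

(* jet of v at the point: value v, gradient vector dv, Hessian form H *)
Definition lapl (H : 'M[R]_n) : R := trg H.
Definition tD (Ric : 'M[R]_n) (v : R) (dv : 'rV[R]_n) (H : 'M[R]_n) : tractor :=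
  Tractor (n%:R * v) (n%:R *: dv) (- (lapl H + Jsch Ric * v)).
Definition tJ Ric v dv H : tractor := tscale (n%:R)^-1 (tD Ric v dv H).

Variables (m mu : R).
Definition Ricmphi (Ric : 'M[R]_n) (v : R) (H : 'M[R]_n) : 'M[R]_n :=
  Ric - (m / v) *: H.
Definition Rmphi (Ric : 'M[R]_n) (v : R) (dv : 'rV[R]_n) (H : 'M[R]_n) : R :=
  scalR Ric - 2 * m / v * lapl H - m * (m - 1) / v ^+ 2 * gdot dv dv.
Definition JW Ric v dv H : R :=
  (2 * (m + n%:R - 1))^-1 * (Rmphi Ric v dv H + m * mu / v ^+ 2).
Definition PW Ric v dv H : 'M[R]_n :=
  (m + n%:R - 2)^-1 *: (Ricmphi Ric v H - JW Ric v dv H *: g).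

Definition tJtilde Ric v dv H : tractor :=
  let J := tJ Ric v dv H in
  tadd J (tscale ((m + 2 * n%:R - 2) * (mu - (m - 1) * tmetric J J)
                  / (2 * (m + n%:R - 1) * (m + n%:R - 2) * tmetric tX J)) tX).

(* middle component of nabla^W I as the 2-tensor
   T(x,z) = g(nabla_x omega + sigma P^W(x) + rho x, z),
   where Dom is the endomorphism x |-> nabla_x omega and
   P^W(x) = x *m PW *m g^{-1} is the vector dual to P^W(x,.) *)
Definition Wmid_form Ric v dv H (I : tractor) (Dom : 'M[R]_n) : 'M[R]_n :=
  (Dom + ttop I *: (PW Ric v dv H *m invmx g) + tbot I *: 1%:M) *m g.

Definition deltaphi (v : R) (dv : 'rV[R]_n) (om : 'rV[R]_n) (Dom : 'M[R]_n) : R :=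
  \tr Dom + m / v * gdot om dv.

End Pointwise.

(* Taking the g-trace of the middle component of nabla^W I gives
   div omega + sigma tr P^W + n rho, and tr P^W is computed from the
   definitions of Ric^m_phi and J^W.  Expanding <I, J~> = sigma J_bot
   + rho v + g(omega, grad v) + sigma c_X, where c_X is the coefficient of X
   in J~, every term without sigma matches the right-hand side; the
   sigma-coefficient cancels once J is written as R / (2 (n - 1)) and
   |J|^2 = 2 v J_bot + |grad v|^2 is used. *)
From HB Require Import structures.
From mathcomp Require Import all_boot all_order all_algebra.
From mathcomp Require Import ring lra.
Import Order.TTheory GRing.Theory Num.Theory.
Local Open Scope ring_scope.

Lemma natrB_neq0 (R : numDomainType) (n k : nat) :
  (k < n)%N -> n%:R - k%:R != 0 :> R.
Proof. by move=> lt_kn; rewrite subr_eq0 eqr_nat gtn_eqF. Qed.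

Section Pointwise.
Variables (R : realFieldType) (n : nat) (g : 'M[R]_n).

Lemma gdotZr (c : R) (x z : 'rV[R]_n) : gdot g x (c *: z) = c * gdot g x z.
Proof. by rewrite /gdot /scal1 linearZ /= -scalemxAr mxE. Qed.

Lemma gdotDr (x y z : 'rV[R]_n) : gdot g x (y + z) = gdot g x y + gdot g x z.
Proof. by rewrite /gdot /scal1 linearD /= mulmxDr mxE. Qed.

Lemma tmetricDr (I K L : tractor R n) :
  tmetric g I (tadd K L) = tmetric g I K + tmetric g I L.
Proof. by rewrite /tmetric /= gdotDr; ring. Qed.

Lemma tmetricZr (c : R) (I K : tractor R n) :
  tmetric g I (tscale c K) = c * tmetric g I K.
Proof. by rewrite /tmetric /= gdotZr; ring. Qed.

Lemma tmetric_tXr (I : tractor R n) : tmetric g I (tX R n) = ttop I.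
Proof. by rewrite /tmetric /gdot /scal1 /= trmx0 mulmx0 mxE; ring. Qed.

Lemma tmetric_tXl (I : tractor R n) : tmetric g (tX R n) I = ttop I.
Proof. by rewrite /tmetric /gdot /scal1 /= !mul0mx mxE; ring. Qed.

Lemma trgB (A B : 'M[R]_n) : trg g (A - B) = trg g A - trg g B.
Proof. by rewrite /trg mulmxBl linearB. Qed.

Lemma trgZ (a : R) (A : 'M[R]_n) : trg g (a *: A) = a * trg g A.
Proof. by rewrite /trg -scalemxAl mxtraceZ. Qed.

Lemma trg_Ricmphi (m v : R) (Ric H : 'M[R]_n) :
  trg g (Ricmphi m Ric v H) = scalR g Ric - m / v * lapl g H.
Proof. by rewrite /Ricmphi trgB trgZ. Qed.

Hypothesis g_unit : g \in unitmx.

Lemma trg_metric : trg g g = n%:R.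
Proof. by rewrite /trg mulmxV // mxtrace1. Qed.

Lemma trg_PW (m mu v : R) (Ric H : 'M[R]_n) (dv : 'rV[R]_n) :
  trg g (PW g m mu Ric v dv H)
  = (m + n%:R - 2)^-1
    * (scalR g Ric - m / v * lapl g H - JW g m mu Ric v dv H * n%:R).
Proof. by rewrite /PW trgZ trgB trgZ trg_Ricmphi trg_metric. Qed.

Lemma trg_Wmid_form (m mu v : R) (Ric H Dom : 'M[R]_n) (dv : 'rV[R]_n)
    (I : tractor R n) :
  trg g (Wmid_form g m mu Ric v dv H I Dom)
  = \tr Dom + ttop I * trg g (PW g m mu Ric v dv H) + tbot I * n%:R.
Proof. by rewrite /trg /Wmid_form mulmxK // !mxtraceD !mxtraceZ mxtrace1. Qed.

Lemma Jsch_scalR (Ric : 'M[R]_n) :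
  (2 < n)%N -> Jsch g Ric = scalR g Ric / (2 * (n%:R - 1)).
Proof.
move=> n_gt2; rewrite /Jsch /schouten trgZ trgB trgZ trg_metric.
have n1 : n%:R - 1 != 0 :> R by apply: (@natrB_neq0 R n 1); exact: ltnW.
have n2 : n%:R - 2 != 0 :> R by apply: (@natrB_neq0 R n 2).
by field; rewrite n1 n2.
Qed.

Lemma tJ_components (Ric H : 'M[R]_n) (v : R) (dv : 'rV[R]_n) :
  (0 < n)%N ->
  tJ g Ric v dv H = Tractor v dv ((n%:R)^-1 * - (lapl g H + Jsch g Ric * v)).
Proof.
move=> n_gt0; have nR : n%:R != 0 :> R by rewrite pnatr_eq0 -lt0n.
by rewrite /tJ /tscale /tD /= scalerA !mulrA mulVf // !mul1r scale1r.
Qed.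

End Pointwise.

Theorem lemma5p13 (R : realFieldType) (n : nat) (g Ric H Dom : 'M[R]_n)
    (m mu v : R) (dv : 'rV[R]_n) (I : tractor R n) :
  (3 <= n)%N ->
  m != - n%:R -> m != 1 - n%:R -> m != 2 - n%:R ->
  g^T = g -> g \in unitmx -> (forall x : 'rV[R]_n, x != 0 -> 0 < gdot g x x) ->
  Ric^T = Ric -> H^T = H ->
  0 < v ->
  trg g (Wmid_form g m mu Ric v dv H I Dom)
    + m / v * tmetric g I (tJtilde g m mu Ric v dv H)
  = (m + n%:R) * tbot I + deltaphi g m v dv (tmid I) Dom
    + ttop I * JW g m mu Ric v dv H.
Proof.
move=> n_gt2 _ m_1n m_2n _ g_unit _ _ _ v_gt0.
have n_gt0 : (0 < n)%N := ltnW (ltnW n_gt2).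
rewrite trg_Wmid_form // trg_PW // /tJtilde tmetricDr tmetricZr tmetric_tXr.
rewrite tmetric_tXl tJ_components // /tmetric /deltaphi /JW /Rmphi.
rewrite Jsch_scalR //=.
have n0 : n%:R != 0 :> R by rewrite pnatr_eq0 -lt0n.
have n1 : n%:R - 1 != 0 :> R by apply: (@natrB_neq0 R n 1); exact: ltnW.
have mn1 : m + n%:R - 1 != 0 by apply: contra m_1n => /eqP e; apply/eqP; lra.
have mn2 : m + n%:R - 2 != 0 by apply: contra m_2n => /eqP e; apply/eqP; lra.
have v0 : v != 0 by rewrite gt_eqF.
(* abstracted so that [field] does not unfold [gdot] into matrix entries *)
set a := gdot g (tmid I) dv; set q := gdot g dv dv.
by field; rewrite n0 n1 mn1 mn2 v0.
Qed.
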